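(* Consider the multiobjective proximal gradient (MPG) algorithm described in the context, applied to the problem $\min_{x\in\mathbb{R}^n} F(x)$ under the standing assumptions (i)–(iii). Then the MPG algorithm is well defined (that is, at any iteration $k$ at which it does not stop, the line search of Step 3 terminates after finitely many trial step sizes, so $x^{k+1}$ is defined), and it stops at iteration $k$ if and only if $x^k$ is a weakly Pareto optimal point of the problem.
   Context: Let $F:\mathbb{R}^n\to(\mathbb{R}\cup\{+\infty\})^m$, $F=(F_1,\ldots,F_m)$, with $F_j=G_j+H_j$ for $j=1,\ldots,m$, where: (i) each $G_j:\mathbb{R}^n\to\mathbb{R}$ is continuously differentiable and convex; (ii) each $H_j:\mathbb{R}^n\to\mathbb{R}\cup\{+\infty\}$ is proper, convex and continuous on its domain $\mathrm{dom}(H_j)$; (iii) $\mathrm{dom}(F):=\{x: F_j(x)<+\infty\ \forall j\}$ is nonempty and closed. For $u,v\in\mathbb{R}^m$, $u\preceq v$ means $u_j\le v_j$ for all $j$, and $u\prec v$ means $u_j<v_j$ for all $j$. A point $\bar x$ is weakly Pareto optimal if there is no $x\in\mathbb{R}^n$ with $F(x)\prec F(\bar x)$. For $x\in\mathrm{dom}(F)$ and $\alpha>0$ define $\psi_x(u):=\max_{j=1,\ldots,m}\big(\nabla G_j(x)^\top(u-x)+H_j(u)-H_j(x)\big)$, $p_\alpha(x):=\arg\min_{u\in\mathbb{R}^n}\psi_x(u)+\frac{1}{2\alpha}\|u-x\|^2$ (unique minimizer), and $\theta_\alpha(x):=\psi_x(p_\alpha(x))+\frac{1}{2\alpha}\|p_\alpha(x)-x\|^2$.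 MPG algorithm. Step 0: choose $x^0\in\mathrm{dom}(F)$, $\alpha>0$, $\gamma\in(0,2/\alpha)$, $0<\tau_1<\tau_2<1$; set $k=0$. Step 1: compute $p^k:=p_\alpha(x^k)$ and $\theta_\alpha(x^k)$. Step 2: if $\theta_\alpha(x^k)=0$, stop. Step 3: set $d^k:=p^k-x^k$, take $j_k^*\in\arg\max_{j}\nabla G_j(x^k)^\top d^k$, set $t=1$. Step 3.1: if $G_{j_k^*}(x^k+td^k)\le G_{j_k^*}(x^k)+t\nabla G_{j_k^*}(x^k)^\top d^k+t\frac{\gamma}{2}\|d^k\|^2$, go to Step 3.2; otherwise replace $t$ by some value in $[\tau_1 t,\tau_2 t]$ and repeat Step 3.1. Step 3.2: if $F(x^k+td^k)\preceq F(x^k)$, set $t_k=t$ and go to Step 4. Step 3.3: replace $t$ by some value in $[\tau_1 t,\tau_2 t]$; if $G_j(x^k+td^k)\le G_j(x^k)+t\nabla G_j(x^k)^\top d^k+t\frac{\gamma}{2}\|d^k\|^2$ for all $j=1,\ldots,m$, set $t_k=t$ and go to Step 4; otherwise repeat Step 3.3. Step 4: $x^{k+1}:=x^k+t_kd^k$, $k\leftarrow k+1$, go to Step 1. *)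

From mathcomp Require Import all_boot all_order all_algebra.
From mathcomp Require Import all_classical all_reals all_analysis.
Import Order.TTheory GRing.Theory Num.Theory.
Import numFieldNormedType.Exports.
Set Implicit Arguments.
Unset Strict Implicit.
Unset Printing Implicit Defensive.
Local Open Scope ring_scope.
Local Open Scope classical_set_scope.

Definition dotv (R : realType) (n : nat) (u v : 'rV[R]_n) : R :=
  \sum_(i < n) u 0 i * v 0 i.
Definition sqnorm (R : realType) (n : nat) (v : 'rV[R]_n) : R :=
  \sum_(i < n) (v 0 i) ^+ 2.

Definition grad (R : realType) (n : nat) (f : 'rV[R]_n -> R) (x : 'rV[R]_n)
  : 'rV[R]_n := \row_i ('d f x (delta_mx 0 i)).

Definition C1 (R : realType) (n : nat) (f : 'rV[R]_n -> R) : Prop :=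
  (forall x, differentiable f x) /\ continuous (grad f).

Definition convex_fun (R : realType) (n : nat) (f : 'rV[R]_n -> R) : Prop :=
  forall (x y : 'rV[R]_n) (l : R), 0 <= l <= 1 ->
    f (l *: x + (1 - l) *: y) <= l * f x + (1 - l) * f y.

Definition edom (R : realType) (n : nat) (h : 'rV[R]_n -> \bar R) : set 'rV[R]_n :=
  [set x | (h x < +oo)%E].

Definition proper_fun (R : realType) (n : nat) (h : 'rV[R]_n -> \bar R) : Prop :=
  (forall x, h x != -oo%E) /\ edom h !=set0.

Definition convex_efun (R : realType) (n : nat) (h : 'rV[R]_n -> \bar R) : Prop :=
  forall (x y : 'rV[R]_n) (l : R), 0 < l < 1 ->
    (h (l *: x + (1 - l) *: y)%R <= l%:E * h x + (1 - l)%:E * h y)%E.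

Definition Fobj (R : realType) (n m : nat) (G : 'I_m -> 'rV[R]_n -> R)
  (H : 'I_m -> 'rV[R]_n -> \bar R) (j : 'I_m) (x : 'rV[R]_n) : \bar R :=
  ((G j x)%:E + H j x)%E.

Definition domF (R : realType) (n m : nat) (G : 'I_m -> 'rV[R]_n -> R)
  (H : 'I_m -> 'rV[R]_n -> \bar R) : set 'rV[R]_n :=
  [set x | forall j, (Fobj G H j x < +oo)%E].

Definition weak_pareto (R : realType) (n m : nat) (G : 'I_m -> 'rV[R]_n -> R)
  (H : 'I_m -> 'rV[R]_n -> \bar R) (xb : 'rV[R]_n) : Prop :=
  ~ exists x, forall j, (Fobj G H j x < Fobj G H j xb)%E.

Definition psi (R : realType) (n m : nat) (G : 'I_m -> 'rV[R]_n -> R)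
  (H : 'I_m -> 'rV[R]_n -> \bar R) (x u : 'rV[R]_n) : \bar R :=
  (\big[maxe/-oo]_(j < m) ((dotv (grad (G j) x) (u - x)%R)%:E + H j u - H j x))%E.

Definition prox_obj (R : realType) (n m : nat) (G : 'I_m -> 'rV[R]_n -> R)
  (H : 'I_m -> 'rV[R]_n -> \bar R) (alpha : R) (x u : 'rV[R]_n) : \bar R :=
  (psi G H x u + ((2 * alpha)^-1 * sqnorm (u - x)%R)%:E)%E.

Definition is_prox (R : realType) (n m : nat) (G : 'I_m -> 'rV[R]_n -> R)
  (H : 'I_m -> 'rV[R]_n -> \bar R) (alpha : R) (x p : 'rV[R]_n) : Prop :=
  forall u, (prox_obj G H alpha x p <= prox_obj G H alpha x u)%E.

Definition theta (R : realType) (n m : nat) (G : 'I_m -> 'rV[R]_n -> R)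
  (H : 'I_m -> 'rV[R]_n -> \bar R) (alpha : R) (x p : 'rV[R]_n) : \bar R :=
  prox_obj G H alpha x p.

(* trial step sizes of the backtracking: t_0 = 1, t_{i+1} = c_i t_i, where
   c_i in [tau1, tau2] encodes the (arbitrary) choice made at the i-th
   reduction "replace t by some value in [tau1 t, tau2 t]". *)
Fixpoint trial (R : realType) (c : nat -> R) (i : nat) : R :=
  match i with 0 => 1 | i'.+1 => c i' * trial c i' end.

Definition armijo (R : realType) (n m : nat) (G : 'I_m -> 'rV[R]_n -> R)
  (gamma : R) (x d : 'rV[R]_n) (j : 'I_m) (t : R) : Prop :=
  G j (x + t *: d) <= G j x + t * dotv (grad (G j) x) d + t * (gamma / 2) * sqnorm d.

Definition Fdecrease (R : realType) (n m : nat) (G : 'I_m -> 'rV[R]_n -> R)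
  (H : 'I_m -> 'rV[R]_n -> \bar R) (x d : 'rV[R]_n) (t : R) : Prop :=
  forall j, (Fobj G H j (x + t *: d)%R <= Fobj G H j x)%E.

(* The line search of Step 3 (with index j*, direction d, choice sequence c)
   terminates after finitely many trial step sizes, and the new iterate
   x + t_k d lies in dom(F).  i1 is the index at which Step 3.1 exits; then
   either Step 3.2 accepts t_{i1}, or Step 3.3 accepts the first later trial
   step t_{i2} satisfying the test for all j. *)
Definition linesearch_terminates (R : realType) (n m : nat)
  (G : 'I_m -> 'rV[R]_n -> R) (H : 'I_m -> 'rV[R]_n -> \bar R)
  (gamma : R) (x d : 'rV[R]_n) (jstar : 'I_m) (c : nat -> R) : Prop :=
  exists i1 : nat,
    armijo G gamma x d jstar (trial c i1) /\
    (forall i, (i < i1)%N -> ~ armijo G gamma x d jstar (trial c i)) /\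
    ((Fdecrease G H x d (trial c i1) /\ domF G H (x + trial c i1 *: d)) \/
     (~ Fdecrease G H x d (trial c i1) /\
      exists i2 : nat, (i1 < i2)%N /\
        (forall j, armijo G gamma x d j (trial c i2)) /\
        (forall i, (i1 < i < i2)%N -> ~ (forall j, armijo G gamma x d j (trial c i))) /\
        domF G H (x + trial c i2 *: d))).

From mathcomp Require Import all_boot all_order all_algebra.
From mathcomp Require Import all_classical all_reals all_analysis.
From mathcomp Require Import ring lra.
Import Order.TTheory GRing.Theory Num.Theory.
Import numFieldNormedType.Exports.
Set Implicit Arguments.
Unset Strict Implicit.
Unset Printing Implicit Defensive.
Local Open Scope ring_scope.
Local Open Scope classical_set_scope.

(* At x in dom F every term of psi_x is convex and continuous on the closed
   convex set dom F and vanishes at x.  Adding ||u - x||^2 / (2 alpha) makes the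
   prox objective strongly convex and coercive on dom F (a convex function grows
   at least linearly away from x), so p_alpha(x) exists, is unique, and
   theta_alpha(x) <= psi_x(x) = 0.  If theta_alpha(x) < 0, every linearized
   decrease grad G_j(x)^T (p - x) + H_j(p) - H_j(x) is negative and a short step
   towards p decreases all the F_j at once.  Conversely, if F(x') < F(x) the
   gradient inequality gives psi_x(x') < 0, and a short step towards x' makes the
   prox objective negative.  The line search stops because Armijo's test holds
   for all small steps while the trial steps shrink geometrically. *)

Section RowVectorGeometry.
Context {R : realType} {n : nat}.
Implicit Types (g u v w x : 'rV[R]_n) (l t : R).

Lemma sqnorm_ge0 v : 0 <= sqnorm v.
Proof. by apply: sumr_ge0 => i _; exact: sqr_ge0. Qed.

Lemma sqnorm_eq0 v : (sqnorm v == 0) = (v == 0).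
Proof.
rewrite psumr_eq0; last by move=> i _; exact: sqr_ge0.
apply/allP/eqP => [v0|-> i _]; last by rewrite /= mxE expr0n.
apply/rowP => i; have /= := v0 i (mem_index_enum i).
by rewrite sqrf_eq0 mxE => /eqP.
Qed.

Lemma sqnorm0 : sqnorm (0 : 'rV[R]_n) = 0.
Proof. by apply/eqP; rewrite sqnorm_eq0. Qed.

Lemma sqnormZ t v : sqnorm (t *: v) = t ^+ 2 * sqnorm v.
Proof. by rewrite /sqnorm mulr_sumr; apply: eq_bigr => i _; rewrite mxE exprMn. Qed.

Lemma sqnorm_comb l u v :
  sqnorm (l *: u + (1 - l) *: v) =
  l * sqnorm u + (1 - l) * sqnorm v - l * (1 - l) * sqnorm (u - v).
Proof.
rewrite /sqnorm !mulr_sumr -big_split /= -sumrB; apply: eq_bigr => i _.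
by rewrite !mxE; ring.
Qed.

Lemma dotvD g u v : dotv g (u + v) = dotv g u + dotv g v.
Proof. by rewrite /dotv -big_split; apply: eq_bigr => i _; rewrite mxE mulrDr. Qed.

Lemma dotvZ g t v : dotv g (t *: v) = t * dotv g v.
Proof. by rewrite /dotv mulr_sumr; apply: eq_bigr => i _; rewrite mxE mulrCA. Qed.

Lemma dotv0 g : dotv g 0 = 0.
Proof. by rewrite -(scale0r 0) dotvZ mul0r. Qed.

Lemma comb_subr l u v w :
  l *: u + (1 - l) *: v - w = l *: (u - w) + (1 - l) *: (v - w).
Proof. by apply/rowP => i; rewrite !mxE; ring. Qed.

Lemma segment_comb x u t : x + t *: (u - x) = t *: u + (1 - t) *: x.
Proof. by apply/rowP => i; rewrite !mxE; ring. Qed.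

Lemma normr_sqr_le_sqnorm v : `|v| ^+ 2 <= sqnorm v.
Proof.
have -> : `|v| = mx_norm v by [].
have [->|/mx_norm_neq0 [[i k] /= ->]] := eqVneq (mx_norm v) 0.
  by rewrite expr0n sqnorm_ge0.
rewrite (ord1 i) real_normK ?num_real // /sqnorm (bigD1 k) //= lerDl.
by apply: sumr_ge0 => j _; exact: sqr_ge0.
Qed.

Lemma continuous_dotv g : continuous (dotv g).
Proof.
move=> u; rewrite /dotv.
apply: (@cvg_big R 'I_n +%R 0 xpredT add_continuous _ (nbhs u)) => i _.
exact: cvgM (cvg_cst _) (@coord_continuous R 1 n 0 i u).
Qed.

Lemma continuous_sqnorm : continuous (@sqnorm R n).
Proof.
move=> u; rewrite /sqnorm.
apply: (@cvg_big R 'I_n +%R 0 xpredT add_continuous _ (nbhs u)) => i _.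
exact: continuous_comp (@coord_continuous R 1 n 0 i u) (@exprn_continuous R 2 _).
Qed.

End RowVectorGeometry.

Lemma cvg_bigmaxr {R : realType} {T I : Type} {F : set_system T} {FF : Filter F}
    (r : seq I) (f0 : T -> R) (f : I -> T -> R) (a0 : R) (a : I -> R) :
  f0 @ F --> a0 -> (forall i, f i @ F --> a i) ->
  \big[Num.max/f0 t]_(i <- r) f i t @[t --> F] --> \big[Num.max/a0]_(i <- r) a i.
Proof.
move=> f0_cvg f_cvg; elim: r => [|i r IHr].
  by under eq_fun do rewrite big_nil; rewrite big_nil.
under eq_fun do rewrite big_cons; rewrite big_cons.
exact: (continuous2_cvg _ (@max_continuous _ R (a i, _)) (f_cvg i) IHr).
Qed.

Section Differentiation.
Context {R : realType} {n : nat}.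
Implicit Types (f : 'rV[R]_n -> R) (d x y : 'rV[R]_n).

Lemma diff_dotv f x d : 'd f x d = dotv (grad f x) d.
Proof.
rewrite {1}(row_sum_delta d) linear_sum /dotv; apply: eq_bigr => i _.
by rewrite linearZ /grad mxE mulrC.
Qed.

Lemma diff_quotient_cvg f x d : differentiable f x ->
  t^-1 * (f (x + t *: d) - f x) @[t --> 0^'+] --> dotv (grad f x) d.
Proof.
move=> fx; rewrite -diff_dotv -deriveE //.
have right_dnbhs : (0 : R)^'+ --> (0 : R)^'.
  move=> P /nbhs_ballP[e e0 Pe]; apply/nbhs_ballP.
  by exists e => // t Bt /lt0r_neq0; exact: Pe.
apply: cvg_trans (cvg_app _ right_dnbhs) _.
under eq_fun do rewrite [x + _]addrC.
exact: diff_derivable.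
Qed.

Lemma near0_open_unit : \forall t \near (0 : R)^'+, 0 < t < 1.
Proof.
by near=> t; apply/andP; split; near: t; [exact: nbhs_right_gt|exact: nbhs_right_lt].
Unshelve. all: by end_near. Qed.

Lemma convex_grad_le f x y : convex_fun f -> differentiable f x ->
  dotv (grad f x) (y - x) <= f y - f x.
Proof.
move=> f_cvx fx; apply/ler_addgt0Pr => e e0.
have quot_gt : \forall t \near 0^'+,
    dotv (grad f x) (y - x) - e < t^-1 * (f (x + t *: (y - x)) - f x).
  by apply: (cvgr_gt _ (diff_quotient_cvg fx)); lra.
have [t [/andP[t0 t1] quot_t]] := filter_ex (filterI near0_open_unit quot_gt).
have : f (x + t *: (y - x)) <= t * f y + (1 - t) * f x.
  by rewrite segment_comb; apply: f_cvx; rewrite ltW // ltW.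
move: quot_t; rewrite ltr_pdivlMl //; nra.
Qed.

End Differentiation.

Section ConvexOnSets.
Context {R : realType} {n : nat}.
Implicit Types (D : set 'rV[R]_n) (f g h : 'rV[R]_n -> R) (u v x p : 'rV[R]_n).

Definition convex_rV D :=
  forall u v l, D u -> D v -> 0 < l < 1 -> D (l *: u + (1 - l) *: v).

Definition convex_on D f := forall u v l, D u -> D v -> 0 < l < 1 ->
  f (l *: u + (1 - l) *: v) <= l * f u + (1 - l) * f v.

Lemma convex_rV_segment D x u t : convex_rV D -> D x -> D u -> 0 < t <= 1 ->
  D (x + t *: (u - x)).
Proof.
move=> D_cvx Dx Du /andP[t0 t1]; rewrite segment_comb.
have [->|t_neq1] := eqVneq t 1; first by rewrite subrr scale0r addr0 scale1r.
by apply: D_cvx => //; rewrite t0 lt_neqAle t_neq1.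
Qed.

Lemma convex_on_segment D f x u t : convex_on D f -> D x -> D u -> 0 < t <= 1 ->
  f (x + t *: (u - x)) <= f x + t * (f u - f x).
Proof.
move=> f_cvx Dx Du /andP[t0 t1]; rewrite segment_comb.
have [->|t_neq1] := eqVneq t 1; first by rewrite subrr scale0r addr0 scale1r; lra.
have : f (t *: u + (1 - t) *: x) <= t * f u + (1 - t) * f x.
  by apply: f_cvx => //; rewrite t0 lt_neqAle t_neq1.
lra.
Qed.

Lemma segment_descent D g h x p : differentiable g x -> convex_on D h ->
  D x -> D p -> dotv (grad g x) (p - x) + h p - h x < 0 ->
  \forall t \near 0^'+,
    g (x + t *: (p - x)) + h (x + t *: (p - x)) < g x + h x.
Proof.
move=> gx h_cvx Dx Dp slope_lt0.
set a := dotv (grad g x) (p - x) + h p - h x in slope_lt0.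
have quot_lt : \forall t \near 0^'+,
    t^-1 * (g (x + t *: (p - x)) - g x) < dotv (grad g x) (p - x) - a / 2.
  by apply: (cvgr_lt _ (diff_quotient_cvg gx)); lra.
near=> t.
have /andP[t0 t1] : 0 < t < 1 by near: t; exact: near0_open_unit.
have : h (x + t *: (p - x)) <= h x + t * (h p - h x).
  by apply: (convex_on_segment h_cvx Dx Dp); rewrite t0 ltW.
have : g (x + t *: (p - x)) - g x < t * (dotv (grad g x) (p - x) - a / 2).
  by rewrite -ltr_pdivrMl //; near: t; exact: quot_lt.
have : t * a < 0 by rewrite pmulr_rlt0.
rewrite /a; lra.
Unshelve. all: by end_near. Qed.

End ConvexOnSets.

Section RegularizedMinimization.
Context {R : realType} {n : nat}.
Implicit Types (D : set 'rV[R]_n) (f : 'rV[R]_n -> R) (u v x p : 'rV[R]_n).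

Definition regularized f (k : R) x u := f u + k * sqnorm (u - x).

Lemma compact_closed_ballI D x r : closed D ->
  compact (D `&` closed_ball_ Num.norm x r).
Proof.
move=> D_closed; apply: bounded_closed_compact; last first.
  by apply: closedI => //; exact: closed_closed_ball_.
exists (r + `|x|); split; first exact: num_real.
move=> M M_gt u [_ /= xu_le].
have : `|u| <= `|x| + `|x - u| by rewrite -[u in `|u|](subKr x); exact: ler_normB.
move: M_gt xu_le; rewrite /closed_ball_ /=; lra.
Qed.

Variables (D : set 'rV[R]_n) (f : 'rV[R]_n -> R) (k : R) (x : 'rV[R]_n).
Hypotheses (D_convex : convex_rV D) (D_closed : closed D) (Dx : D x).
Hypotheses (f_convex : convex_on D f) (f_cont : {within D, continuous f}).
Hypothesis k_gt0 : 0 < k.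
Local Notation q := (regularized f k x).

Lemma regularized_center : q x = f x.
Proof. by rewrite /regularized subrr sqnorm0 mulr0 addr0. Qed.

Lemma regularized_strongly_convex u v l : D u -> D v -> 0 < l < 1 ->
  q (l *: u + (1 - l) *: v) <= l * q u + (1 - l) * q v - k * (l * (1 - l)) * sqnorm (u - v).
Proof.
move=> Du Dv l01; have := f_convex Du Dv l01.
rewrite /regularized comb_subr sqnorm_comb.
have -> : (u - x) - (v - x) = u - v by rewrite opprB addrA subrK.
lra.
Qed.

Lemma regularized_min_unique p p' : D p -> D p' ->
  (forall u, D u -> q p <= q u) -> (forall u, D u -> q p' <= q u) -> p' = p.
Proof.
move=> Dp Dp' p_min p'_min.
have half01 : 0 < (2 : R)^-1 < 1 by apply/andP; split; lra.
have c_gt0 : 0 < k * (2^-1 * (1 - 2^-1)) by apply: mulr_gt0 => //; lra.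
have : k * (2^-1 * (1 - 2^-1)) * sqnorm (p - p') <= 0.
  have := regularized_strongly_convex Dp Dp' half01.
  have := p_min _ (D_convex Dp Dp' half01); have := p'_min _ Dp; lra.
rewrite pmulr_rle0 // => sqnorm_le0.
by apply/eqP; rewrite eq_sym -subr_eq0 -sqnorm_eq0 eq_le sqnorm_le0 sqnorm_ge0.
Qed.

Lemma convex_on_linear_minorant : exists M, forall u, D u -> 1 <= `|u - x| ->
  f x + `|u - x| * M <= f u.
Proof.
have ball1 : (D `&` closed_ball_ Num.norm x 1) x.
  by split; rewrite // /closed_ball_ /= subrr normr0.
have [w _ w_min] := EVT_min_rV (ex_intro _ x ball1)
  (compact_closed_ballI D_closed) (continuous_subspaceW (@subIsetl _ _ _) f_cont).
exists (f w - f x) => u Du ux_ge1.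
have ux_gt0 : 0 < `|u - x| by exact: lt_le_trans ux_ge1.
set t := `|u - x|^-1.
have t01 : 0 < t <= 1 by rewrite invr_gt0 ux_gt0 invr_le1 // unitfE gt_eqF.
have : f w <= f (x + t *: (u - x)).
  apply: w_min; rewrite inE; split; first exact: convex_rV_segment.
  rewrite /closed_ball_ /= opprD addrA subrr sub0r normrN normrZ.
  by rewrite gtr0_norm ?invr_gt0 // mulVf ?gt_eqF.
have := convex_on_segment f_convex Dx Du t01.
move=> seg_le w_le; have : f w - f x <= t * (f u - f x) by lra.
rewrite -(ler_pM2l ux_gt0) mulrA mulfV ?gt_eqF // mul1r; lra.
Qed.

Lemma regularized_continuous : {within D, continuous q}.
Proof.
apply/subspace_continuousP => u Du; apply: cvgD.
  by move/subspace_continuousP : f_cont; apply.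
apply: cvgM; first exact: cvg_cst.
apply: cvg_within_filter; apply: continuous_comp; last exact: continuous_sqnorm.
exact: cvgB cvg_id (cvg_cst x).
Qed.

Lemma regularized_exists_min : exists2 p, D p & forall u, D u -> q p <= q u.
Proof.
have [M M_le] := convex_on_linear_minorant.
set r := 1 + `|M| / k.
have ball_x : (D `&` closed_ball_ Num.norm x r) x.
  by split; rewrite // /closed_ball_ /= subrr normr0 addr_ge0 ?divr_ge0 // ltW.
have := EVT_min_rV (ex_intro _ x ball_x)
  (compact_closed_ballI D_closed)
  (continuous_subspaceW (@subIsetl _ _ _) regularized_continuous).
move=> [p /set_mem [Dp _] p_min].
exists p => // u Du.
have [ux_le|ux_gt] := leP `|u - x| r.
  by apply: p_min; rewrite inE; split; rewrite // /closed_ball_ /= distrC.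
have : q p <= q x by apply: p_min; rewrite inE.
rewrite regularized_center => /le_trans; apply; apply: ltW.
have r1 : 1 <= r by rewrite lerDl divr_ge0 // ltW.
have ux_ge1 : 1 <= `|u - x| by rewrite (le_trans r1) // ltW.
have M_lt : `|M| < k * `|u - x|.
  apply: le_lt_trans (_ : `|M| <= k * r) _; last by rewrite ltr_pM2l.
  by rewrite /r mulrDr mulr1 (mulrCA k) mulfV ?gt_eqF // mulr1 lerDr ltW.
have : 0 < `|u - x| * (k * `|u - x| + M).
  by apply: mulr_gt0; [exact: lt_le_trans ux_ge1 | have := ler_norm (- M); rewrite normrN; lra].
have : k * `|u - x| ^+ 2 <= k * sqnorm (u - x).
  by rewrite ler_pM2l // normr_sqr_le_sqnorm.
have := M_le u Du ux_ge1.
rewrite /regularized; nra.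
Qed.

Lemma regularized_lt_center u : D u -> f u < f x -> exists2 v, D v & q v < f x.
Proof.
move=> Du fu_lt; set S := sqnorm (u - x).
have kS1_gt0 : 0 < k * S + 1.
  by rewrite ltr_wpDl // mulr_ge0 ?sqnorm_ge0 // ltW.
have b_gt0 : 0 < (f x - f u) / (k * S + 1) by rewrite divr_gt0 // subr_gt0.
have [t [/andP[t0 t1] t_lt]] :=
  filter_ex (filterI near0_open_unit (nbhs_right_lt b_gt0)).
have t01 : 0 < t <= 1 by rewrite t0 ltW.
exists (x + t *: (u - x)); first exact: convex_rV_segment.
have := convex_on_segment f_convex Dx Du t01.
rewrite ltr_pdivlMr // in t_lt.
rewrite /regularized [x + _ - x]addrC addKr sqnormZ -/S.
nra.
Qed.

End RegularizedMinimization.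

Section TrialSteps.
Context {R : realType}.
Variables (c : nat -> R) (tau1 tau2 : R).
Hypotheses (tau1_gt0 : 0 < tau1) (tau2_lt1 : tau2 < 1).
Hypothesis c_bounds : forall i, tau1 <= c i <= tau2.

Let tau2_ge0 : 0 <= tau2.
Proof. by have /andP[c1 c2] := c_bounds 0; rewrite (le_trans (ltW tau1_gt0)) // (le_trans c1). Qed.

Lemma trial_gt0 i : 0 < trial c i.
Proof.
elim: i => [|i IHi] /=; first exact: ltr01.
by have /andP[c1 _] := c_bounds i; rewrite mulr_gt0 // (lt_le_trans tau1_gt0).
Qed.

Lemma trial_le_expr i : trial c i <= tau2 ^+ i.
Proof.
elim: i => [|i IHi] /=; first by rewrite expr0.
have /andP[c1 c2] := c_bounds i.
by rewrite exprS ler_pM // ?ltW ?trial_gt0 // (lt_le_trans tau1_gt0).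
Qed.

Lemma trial_le1 i : trial c i <= 1.
Proof. by apply: le_trans (trial_le_expr i) _; rewrite exprn_ile1 // ltW. Qed.

Lemma trial_cvg : trial c i @[i --> \oo] --> 0^'+.
Proof.
have trial_to0 : trial c i @[i --> \oo] --> 0.
  have tau2_norm_lt1 : `|tau2| < 1 by rewrite ger0_norm.
  apply: (squeeze_cvgr _ (cvg_cst 0) (cvg_expr tau2_norm_lt1)).
  by near=> i; rewrite (ltW (trial_gt0 i)) trial_le_expr.
move=> P /nbhs_ballP[e e0 Pe].
suff : \forall i \near \oo, P (trial c i) by [].
near=> i; apply: Pe (trial_gt0 i).
rewrite /ball /= sub0r normrN gtr0_norm ?trial_gt0 //.
by near: i; exact: cvgr_lt trial_to0 _ e0.
Unshelve. all: by end_near. Qed.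

End TrialSteps.

Section LineSearch.
Context {R : realType} {n m : nat}.
Variables (G : 'I_m -> 'rV[R]_n -> R) (H : 'I_m -> 'rV[R]_n -> \bar R).
Variables (gamma : R) (x d : 'rV[R]_n).

Lemma armijo_near0 j : differentiable (G j) x -> 0 < gamma ->
  \forall t \near 0^'+, armijo G gamma x d j t.
Proof.
move=> Gx gamma_gt0; rewrite /armijo.
have [->|d_neq0] := eqVneq d 0.
  by near=> t; rewrite scaler0 addr0 dotv0 sqnorm0 !mulr0 !addr0.
have S_gt0 : 0 < sqnorm d by rewrite lt_def sqnorm_eq0 d_neq0 sqnorm_ge0.
have quot_lt : \forall t \near 0^'+, t^-1 * (G j (x + t *: d) - G j x) <
    dotv (grad (G j) x) d + gamma / 2 * sqnorm d.
  apply: (cvgr_lt _ (diff_quotient_cvg Gx)).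
  by rewrite ltrDl mulr_gt0 ?divr_gt0.
near=> t.
have t_gt0 : 0 < t by near: t; exact: nbhs_right_gt.
have : t^-1 * (G j (x + t *: d) - G j x) < dotv (grad (G j) x) d + gamma / 2 * sqnorm d.
  by near: t; exact: quot_lt.
rewrite ltr_pdivrMl // => /ltW; lra.
Unshelve. all: by end_near. Qed.

Lemma linesearch_terminates_near0 jstar (c : nat -> R) :
  (forall j, \forall t \near 0^'+, armijo G gamma x d j t) ->
  trial c i @[i --> \oo] --> 0^'+ ->
  (forall i, domF G H (x + trial c i *: d)) ->
  linesearch_terminates G H gamma x d jstar c.
Proof.
move=> armijo_near trial_to0 dom_trial.
have [N _ armijo_from_N] :
    \forall i \near \oo, forall j, armijo G gamma x d j (trial c i).
  exact: (trial_to0 _ (filter_forall _ armijo_near)).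
pose P1 i := `[< armijo G gamma x d jstar (trial c i) >].
have P1_ex : exists i, P1 i.
  by exists N; apply/asboolP; exact: (armijo_from_N N (leqnn N)).
have [i1 /asboolP armijo_i1 i1_min] := ex_minnP P1_ex.
exists i1; split => //; split.
  by move=> i i_lt /asboolT /i1_min; rewrite leqNgt i_lt.
have [decr|not_decr] := pselect (Fdecrease G H x d (trial c i1)); [by left|right].
split => //.
pose P2 i := (i1 < i)%N && `[< forall j, armijo G gamma x d j (trial c i) >].
have P2_ex : exists i, P2 i.
  exists (maxn N i1.+1); rewrite /P2 leq_max ltnSn orbT /=.
  by apply/asboolP; apply: armijo_from_N; rewrite /= leq_maxl.
have [i2 /andP[i1_lt /asboolP armijo_i2] i2_min] := ex_minnP P2_ex.
exists i2; split => //; split => //; split => //.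
move=> i /andP[i1_lt_i i_lt] /asboolT armijo_i.
by have := i2_min i; rewrite /P2 i1_lt_i armijo_i leqNgt i_lt => /(_ isT).
Qed.

End LineSearch.

Section CompositeObjective.
Context {R : realType} {n m : nat}.
Variables (G : 'I_m -> 'rV[R]_n -> R) (H : 'I_m -> 'rV[R]_n -> \bar R).
Hypothesis H_proper : forall j, proper_fun (H j).
Hypothesis H_convex : forall j, convex_efun (H j).
Local Notation D := (domF G H).

Lemma domF_fin_num j u : D u -> H j u \is a fin_num.
Proof.
move=> /(_ j); rewrite /Fobj; have := (H_proper j).1 u.
by case: (H j u).
Qed.

Lemma domF_fineK j u : D u -> (fine (H j u))%:E = H j u.
Proof. by move=> Du; rewrite fineK // domF_fin_num. Qed.

Lemma notin_domF u : ~ D u -> exists j, H j u = +oo%E.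
Proof.
move=> /existsNP[j Hj]; exists j; move: Hj; rewrite /Fobj.
by case: (H j u) ((H_proper j).1 u) => // r _ /(_ (ltry _)).
Qed.

Lemma H_comb_le j u v l : D u -> D v -> 0 < l < 1 ->
  (H j (l *: u + (1 - l) *: v) <= (l * fine (H j u) + (1 - l) * fine (H j v))%:E)%E.
Proof.
by move=> Du Dv l01; rewrite EFinD !EFinM !domF_fineK //; exact: H_convex.
Qed.

Lemma domF_convex : convex_rV D.
Proof.
move=> u v l Du Dv l01 j; rewrite /Fobj lte_add_pinfty ?ltry //.
exact: le_lt_trans (H_comb_le j Du Dv l01) (ltry _).
Qed.

Lemma fine_H_convex j : convex_on D (fine \o H j).
Proof.
move=> u v l Du Dv l01 /=; rewrite -lee_fin domF_fineK ?H_comb_le //.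
exact: domF_convex.
Qed.

End CompositeObjective.

Section ProximalSubproblem.
Context {R : realType} {n m : nat}.
Variables (G : 'I_m -> 'rV[R]_n -> R) (H : 'I_m -> 'rV[R]_n -> \bar R).
Hypothesis m_gt0 : (0 < m)%N.
Hypothesis H_proper : forall j, proper_fun (H j).
Hypothesis H_convex : forall j, convex_efun (H j).
Variables (alpha : R) (x : 'rV[R]_n).
Hypothesis alpha_gt0 : 0 < alpha.
Local Notation D := (domF G H).
Hypothesis Dx : D x.

Let D_convex : convex_rV D := domF_convex H_proper H_convex.

Let k_gt0 : 0 < (2 * alpha)^-1.
Proof. by rewrite invr_gt0 mulr_gt0. Qed.

Definition psi_part j u := dotv (grad (G j) x) (u - x) + fine (H j u) - fine (H j x).

(* The real-valued [psi] on [dom F]; the max is seeded with its first term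
   because [R] has no least element. *)
Definition psir u := \big[Num.max/psi_part (Ordinal m_gt0) u]_(j < m) psi_part j u.

Local Notation q := (regularized psir (2 * alpha)^-1 x).

Lemma psi_part_le j u : psi_part j u <= psir u.
Proof. exact: le_bigmax. Qed.

Lemma psir_lt0 u : (forall j, psi_part j u < 0) -> psir u < 0.
Proof. by move=> lt0; apply/bigmax_ltP; split => [|j _]; exact: lt0. Qed.

Lemma psir_center : psir x = 0.
Proof.
have psi_part_x j : psi_part j x = 0 by rewrite /psi_part subrr dotv0 add0r subrr.
apply/le_anti; rewrite -(psi_part_x (Ordinal m_gt0)) psi_part_le andbT.
by apply: bigmax_le => [|j _]; rewrite !psi_part_x.
Qed.

Lemma psiE u : D u -> psi G H x u = (psir u)%:E.
Proof.
move=> Du; rewrite /psi /psir -EFin_bigmax.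
under eq_bigr do rewrite -(domF_fineK H_proper _ Du) -(domF_fineK H_proper _ Dx).
apply/le_anti/andP; split; apply: bigmax_le => //.
- exact: leNye.
- by move=> j _; exact: le_bigmax.
- exact: le_bigmax.
- by move=> j _; exact: le_bigmax.
Qed.

Lemma prox_objE u : D u -> prox_obj G H alpha x u = (q u)%:E.
Proof. by move=> Du; rewrite /prox_obj psiE. Qed.

Lemma prox_obj_notin u : ~ D u -> prox_obj G H alpha x u = +oo%E.
Proof.
move=> /(notin_domF H_proper)[j Hj].
rewrite /prox_obj; suff -> : psi G H x u = +oo%E by [].
apply/eqP; rewrite -leye_eq /psi; apply: (bigmax_sup j) => //.
by rewrite Hj -(domF_fineK H_proper _ Dx).
Qed.

Lemma is_proxP p :
  is_prox G H alpha x p <-> D p /\ forall u, D u -> q p <= q u.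
Proof.
split => [p_min|[Dp p_min] u].
  have Dp : D p.
    apply: contrapT => /prox_obj_notin p_out; have := p_min x.
    by rewrite p_out prox_objE.
  by split=> // u Du; have := p_min u; rewrite !prox_objE // lee_fin.
have [Du|/prox_obj_notin ->] := pselect (D u); last exact: leey.
by rewrite !prox_objE // lee_fin; exact: p_min.
Qed.

Lemma psir_convex : convex_on D psir.
Proof.
move=> u v l Du Dv /[dup] l01 /andP[l0 l1].
have part_le j : psi_part j (l *: u + (1 - l) *: v) <= l * psir u + (1 - l) * psir v.
  apply: le_trans (_ : l * psi_part j u + (1 - l) * psi_part j v <= _).
    have := fine_H_convex H_proper H_convex j Du Dv l01.
    by rewrite /psi_part comb_subr dotvD !dotvZ /=; lra.
  by rewrite lerD // ler_wpM2l ?psi_part_le // ?subr_ge0 ltW.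
by apply: bigmax_le => [|j _]; exact: part_le.
Qed.

Hypothesis H_cont : forall j, {within edom (H j), continuous (H j)}.

Lemma psir_continuous : {within D, continuous psir}.
Proof.
apply/subspace_continuousP => u Du.
have fineH_cvg j : fine (H j v) @[v --> within D (nbhs u)] --> fine (H j u).
  have D_sub : D `<=` edom (H j).
    by move=> v Dv; rewrite /edom /= -(domF_fineK H_proper _ Dv) ltry.
  move/subspace_continuousP : (continuous_subspaceW D_sub (@H_cont j)) => /(_ u Du).
  by rewrite /from_subspace -(domF_fineK H_proper j Du) => /fine_cvg.
have part_cvg j : psi_part j v @[v --> within D (nbhs u)] --> psi_part j u.
  apply: cvgB (cvgD _ (fineH_cvg j)) (cvg_cst _).
  apply: cvg_within_filter; apply: continuous_comp; last exact: continuous_dotv.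
  exact: cvgB cvg_id (cvg_cst x).
exact: cvg_bigmaxr (part_cvg _) part_cvg.
Qed.

Hypothesis domF_closed : closed D.

Lemma prox_exists_unique :
  exists p, is_prox G H alpha x p /\ forall p', is_prox G H alpha x p' -> p' = p.
Proof.
have [p Dp p_min] := regularized_exists_min D_convex domF_closed Dx psir_convex
  psir_continuous k_gt0.
exists p; split; first exact/is_proxP.
move=> p' /is_proxP[Dp' p'_min].
exact: (regularized_min_unique D_convex psir_convex k_gt0 Dp Dp' p_min p'_min).
Qed.

Hypothesis G_diff : forall j, differentiable (G j) x.

Lemma psir_lt0_not_weak_pareto p : D p -> psir p < 0 -> ~ weak_pareto G H x.
Proof.
move=> Dp psir_p_lt0; apply; set d := p - x.
have descent j : \forall t \near 0^'+,
    G j (x + t *: d) + fine (H j (x + t *: d)) < G j x + fine (H j x).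
  apply: (segment_descent (@G_diff j) (fine_H_convex H_proper H_convex j) Dx Dp).
  exact: le_lt_trans (psi_part_le j p) psir_p_lt0.
have [t [/andP[t0 t1] t_descent]] :=
  filter_ex (filterI near0_open_unit (filter_forall _ descent)).
have Dt : D (x + t *: d) by apply: convex_rV_segment D_convex Dx Dp _; rewrite t0 ltW.
exists (x + t *: d) => j; rewrite /Fobj.
by rewrite -(domF_fineK H_proper _ Dt) -(domF_fineK H_proper _ Dx) -!EFinD lte_fin.
Qed.

Hypothesis G_convex : forall j, convex_fun (G j).

Lemma not_weak_pareto_psir_lt0 : ~ weak_pareto G H x -> exists2 u, D u & psir u < 0.
Proof.
move=> /contrapT[u F_lt]; have Du : D u by move=> j; exact: lt_trans (F_lt j) (Dx j).
exists u => //; apply: psir_lt0 => j.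
have := F_lt j; rewrite /Fobj -(domF_fineK H_proper _ Du) -(domF_fineK H_proper _ Dx).
rewrite -!EFinD lte_fin /psi_part.
have := convex_grad_le u (@G_convex j) (@G_diff j); lra.
Qed.

Lemma theta_eq0_iff p :
  is_prox G H alpha x p -> (theta G H alpha x p = 0%E <-> weak_pareto G H x).
Proof.
move=> /[dup] /is_proxP[Dp p_min] p_prox; rewrite /theta prox_objE //.
have qp_le0 : q p <= 0 by have := p_min x Dx; rewrite regularized_center psir_center.
split => [[qp_eq0] dominated | wp].
  have [u Du] := not_weak_pareto_psir_lt0 (fun wp => wp dominated).
  rewrite -psir_center => /(regularized_lt_center D_convex Dx psir_convex k_gt0 Du).
  by case=> v Dv; rewrite psir_center => qv_lt0; have := p_min v Dv; lra.
congr EFin; apply/le_anti; rewrite qp_le0 /= leNgt; apply/negP => qp_lt0.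
apply: (psir_lt0_not_weak_pareto Dp _ wp).
have := mulr_ge0 (ltW k_gt0) (sqnorm_ge0 (p - x)).
by move: qp_lt0; rewrite /regularized; lra.
Qed.

End ProximalSubproblem.

Theorem mainTheorem1 (R : realType) (n m : nat)
  (G : 'I_m -> 'rV[R]_n -> R) (H : 'I_m -> 'rV[R]_n -> \bar R)
  (m_gt0 : (0 < m)%N)
  (G_C1 : forall j, C1 (G j))
  (G_convex : forall j, convex_fun (G j))
  (H_proper : forall j, proper_fun (H j))
  (H_convex : forall j, convex_efun (H j))
  (H_cont : forall j, {within edom (H j), continuous (H j)})
  (domF_ne : domF G H !=set0)
  (domF_closed : closed (domF G H))
  (alpha gamma tau1 tau2 : R)
  (alpha_gt0 : 0 < alpha) (gamma_gt0 : 0 < gamma) (gamma_lt : gamma < 2 / alpha)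
  (tau1_gt0 : 0 < tau1) (tau12 : tau1 < tau2) (tau2_lt1 : tau2 < 1) :
  forall x : 'rV[R]_n, domF G H x ->
    (* Step 1 is well defined: p_alpha(x) exists and is unique *)
    (exists p, is_prox G H alpha x p /\ forall q, is_prox G H alpha x q -> q = p) /\
    (forall p, is_prox G H alpha x p ->
       (* the algorithm stops at x iff x is weakly Pareto optimal *)
       ((theta G H alpha x p = 0%E <-> weak_pareto G H x) /\
       (* if it does not stop, the line search of Step 3 terminates,
          whatever admissible trial step sizes are chosen *)
        (theta G H alpha x p != 0%E ->
         forall jstar : 'I_m,
           (forall j, dotv (grad (G j) x) (p - x) <= dotv (grad (G jstar) x) (p - x)) ->
           forall c : nat -> R, (forall i, tau1 <= c i <= tau2) ->
             linesearch_terminates G H gamma x (p - x) jstar c))).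
Proof.
move=> x Dx; have G_diff j : differentiable (G j) x := (G_C1 j).1 x.
split; first exact: prox_exists_unique.
move=> p p_prox; have [Dp _] := (is_proxP m_gt0 H_proper alpha Dx p).1 p_prox.
split; first exact: theta_eq0_iff p_prox.
(* Armijo's test holds for all small steps in any direction. *)
move=> _ jstar _ c c_bounds; apply: linesearch_terminates_near0.
- by move=> j; exact: armijo_near0 (G_diff j) gamma_gt0.
- exact: trial_cvg tau1_gt0 tau2_lt1 c_bounds.
- move=> i; apply: convex_rV_segment (domF_convex H_proper H_convex) Dx Dp _.
  by rewrite (trial_gt0 tau1_gt0 c_bounds) (trial_le1 tau1_gt0 tau2_lt1 c_bounds).
Qed.
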